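(* Let $\mathbb H=\mathbb R$ or $\mathbb C$. Assume $(\mathbf A,\mathbf b)\in\mathbb H^{m\times(d+1)}$ is affine phase retrievable for $\mathbb H^d$ and let $\Omega\subset\mathbb H^d$ be a compact set. Then there exist positive constants $C_1,C_2,c_1,c_2$ depending on $(\mathbf A,\mathbf b)$ and $\Omega$ such that for all $\mathbf x,\mathbf y\in\Omega$, $$\frac{c_1}{1+\|\mathbf x\|+\|\mathbf y\|}\|\mathbf x-\mathbf y\|\le\|\mathbf M_{\mathbf A,\mathbf b}(\mathbf x)-\mathbf M_{\mathbf A,\mathbf b}(\mathbf y)\|\le C_1\|\mathbf x-\mathbf y\|,$$ $$c_2\|\mathbf x-\mathbf y\|\le\|\mathbf M^2_{\mathbf A,\mathbf b}(\mathbf x)-\mathbf M^2_{\mathbf A,\mathbf b}(\mathbf y)\|\le C_2(1+\|\mathbf x\|+\|\mathbf y\|)\|\mathbf x-\mathbf y\|.$$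
   Context: For $\mathbf u,\mathbf v\in\mathbb H^d$, $\langle\mathbf u,\mathbf v\rangle=\sum_i\overline{u_i}v_i$; $\|\cdot\|$ is the Euclidean norm. With $\mathbf A=(\mathbf a_1,\ldots,\mathbf a_m)^\top\in\mathbb H^{m\times d}$ and $\mathbf b=(b_1,\ldots,b_m)^\top\in\mathbb H^m$, $\mathbf M_{\mathbf A,\mathbf b}(\mathbf x)=(|\langle\mathbf a_1,\mathbf x\rangle+b_1|,\ldots,|\langle\mathbf a_m,\mathbf x\rangle+b_m|)$ and $\mathbf M^2_{\mathbf A,\mathbf b}(\mathbf x)=(|\langle\mathbf a_1,\mathbf x\rangle+b_1|^2,\ldots,|\langle\mathbf a_m,\mathbf x\rangle+b_m|^2)$. $(\mathbf A,\mathbf b)$ is affine phase retrievable for $\mathbb H^d$ if $\mathbf M_{\mathbf A,\mathbf b}$ is injective on $\mathbb H^d$. *)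

From HB Require Import structures.
From mathcomp Require Import all_boot all_order all_algebra.
From mathcomp Require Import all_classical all_reals topology normedtype.
From mathcomp Require Import complex.
Set Implicit Arguments. Unset Strict Implicit. Unset Printing Implicit Defensive.
Import Order.TTheory GRing.Theory Num.Theory.
Import numFieldNormedType.Exports.
Local Open Scope ring_scope.
Local Open Scope classical_set_scope.

(* The scalar field H is encoded by a type K together with the conjugation
   [conj : K -> K] (identity for H = R, complex conjugation for H = C) and the
   modulus [modu : K -> R] (|.| for R, the complex modulus for C). *)

Section Generic.
Variables (R : realType) (K : nzRingType) (conj : K -> K) (modu : K -> R).

Definition hdot (d : nat) (u v : 'rV[K]_d) : K :=
  \sum_(i < d) conj (u 0 i) * v 0 i.

Definition hnorm (d : nat) (v : 'rV[K]_d) : R :=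
  Num.sqrt (\sum_(i < d) modu (v 0 i) ^+ 2).

Definition rnorm (m : nat) (v : 'rV[R]_m) : R :=
  Num.sqrt (\sum_(i < m) v 0 i ^+ 2).

Definition Mab (m d : nat) (A : 'M[K]_(m, d)) (b : 'rV[K]_m) (x : 'rV[K]_d)
  : 'rV[R]_m := \row_(i < m) modu (hdot (row i A) x + b 0 i).

Definition M2ab (m d : nat) (A : 'M[K]_(m, d)) (b : 'rV[K]_m) (x : 'rV[K]_d)
  : 'rV[R]_m := \row_(i < m) modu (hdot (row i A) x + b 0 i) ^+ 2.

Definition affine_phase_retrievable (m d : nat) (A : 'M[K]_(m, d))
  (b : 'rV[K]_m) : Prop := injective (Mab A b).

Definition affine_stability_bounds (m d : nat) (A : 'M[K]_(m, d))
  (b : 'rV[K]_m) (Omega : set 'rV[K]_d) : Prop :=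
  exists C1 C2 c1 c2 : R,
    [/\ 0 < C1, 0 < C2, 0 < c1 & 0 < c2] /\
    forall x y, Omega x -> Omega y ->
      [/\ c1 / (1 + hnorm x + hnorm y) * hnorm (x - y)
            <= rnorm (Mab A b x - Mab A b y),
          rnorm (Mab A b x - Mab A b y) <= C1 * hnorm (x - y),
          c2 * hnorm (x - y) <= rnorm (M2ab A b x - M2ab A b y) &
          rnorm (M2ab A b x - M2ab A b y)
            <= C2 * (1 + hnorm x + hnorm y) * hnorm (x - y)].

End Generic.

(* Identification C^d = R^d x R^d (real and imaginary parts), which defines
   the standard topology on C^d. *)
Definition realify (R : realType) (d : nat) (x : 'rV[R[i]]_d)
  : 'rV[R]_d * 'rV[R]_d :=
  (\row_(j < d) complex.Re (x 0 j), \row_(j < d) complex.Im (x 0 j)).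

Definition compactC (R : realType) (d : nat) (Omega : set 'rV[R[i]]_d) : Prop :=
  compact (realify (R := R) (d := d) @` Omega).

Definition cmod (R : realType) (z : R[i]) : R :=
  Num.sqrt (complex.Re z ^+ 2 + complex.Im z ^+ 2).

(* Put u_j(x) = <a_j, x> + b_j.  As |p|^2 - |q|^2 = Re (conj (p - q) (p + q)),
   the j-th entry of M^2(x) - M^2(y) is Re (conj <a_j, x-y> (u_j(x) + u_j(y))),
   so ||M^2(x) - M^2(y)||^2 = G(x, y, x - y) where G = [M2_gap] is quadratic
   in h.  If G(x, y, h) = 0 with h <> 0, then (x + y + h)/2 and
   (x + y - h)/2 have the same squared, hence the same, measurements, against
   injectivity of M.  So the continuous G is positive on
   Omega x Omega x (unit sphere) and, by compactness, bounded below by some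
   c > 0; scaling h = x - y to the unit sphere gives c_2 = sqrt c.  The bound
   for M follows from M^2(x)_j - M^2(y)_j = (M(x)_j - M(y)_j) (M(x)_j + M(y)_j)
   and M(x)_j + M(y)_j <= C (1 + |x| + |y|); the upper bounds come from the
   triangle inequality. *)

From HB Require Import structures.
From mathcomp Require Import all_boot all_order all_algebra.
From mathcomp Require Import all_classical all_reals topology normedtype.
From mathcomp Require Import complex.
From mathcomp Require Import ring lra derive.
Set Implicit Arguments. Unset Strict Implicit. Unset Printing Implicit Defensive.
Import Order.TTheory GRing.Theory Num.Theory.
Import numFieldNormedType.Exports.
Local Open Scope ring_scope.
Local Open Scope classical_set_scope.

Lemma ler_sum_term (R : numDomainType) (I : finType) (F : I -> R) i :
  (forall j, 0 <= F j) -> F i <= \sum_j F j.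
Proof. by move=> F0; rewrite (bigD1 i) //= lerDl sumr_ge0. Qed.

Section RealRowNorm.
Variable R : realType.

Lemma sqr_rnorm n (v : 'rV[R]_n) : rnorm v ^+ 2 = \sum_j v 0 j ^+ 2.
Proof. by rewrite sqr_sqrtr // sumr_ge0 // => j _; rewrite sqr_ge0. Qed.

Lemma rnorm_le_const n (v : 'rV[R]_n) B :
  0 <= B -> (forall j, `|v 0 j| <= B) -> rnorm v <= (n%:R + 1) * B.
Proof.
move=> B0 vB; rewrite -[leRHS]ger0_norm ?mulr_ge0 ?addr_ge0 //.
rewrite -sqrtr_sqr; apply: ler_wsqrtr.
apply: (@le_trans _ _ (\sum_(j < n) B ^+ 2)).
  by apply: ler_sum => j _; rewrite -real_normK ?num_real // lerXn2r ?nnegrE.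
rewrite sumr_const card_ord -mulr_natl.
have n0 : 0 <= (n%:R : R) by [].
nra.
Qed.

Lemma rnorm_le_scale n (v w : 'rV[R]_n) s :
  0 <= s -> (forall j, `|w 0 j| <= s * `|v 0 j|) -> rnorm w <= s * rnorm v.
Proof.
move=> s0 wv; rewrite -(ger0_norm s0) -sqrtr_sqr -sqrtrM ?sqr_ge0 //.
apply: ler_wsqrtr; rewrite mulr_sumr; apply: ler_sum => j _.
rewrite -(real_normK (num_real (w 0 j))) -(real_normK (num_real (v 0 j))).
have := wv j; have := normr_ge0 (w 0 j); nra.
Qed.

End RealRowNorm.

Lemma compact_min_gt0 (R : realType) (T : topologicalType) (D : set T)
    (f : T -> R) :
  compact D -> continuous f -> (forall t, D t -> 0 < f t) ->
  exists2 c, 0 < c & forall t, D t -> c <= f t.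
Proof.
move=> cD cf f_gt0; have [D0|D0] := pselect (D !=set0); last first.
  by exists 1 => // t Dt; exfalso; apply: D0; exists t.
have cfD : {within D, continuous f} by exact: continuous_subspaceT.
have [t /set_mem Dt ft_min] := compact_EVT_min D0 cD cfD.
by exists (f t) => [|s Ds]; [exact: f_gt0 | apply: ft_min; exact: mem_set].
Qed.

Section AffineMeasurements.
Variables (R : realType) (K : numFieldType) (conj : K -> K) (modu : K -> R).
(* [emb] embeds the reals into the scalars and [Lre w s] is the real part of
   [conj w * s], the real bilinear form that polarizes [modu ^+ 2]. *)
Variables (emb : R -> K) (Lre : K -> K -> R).
Hypothesis modu_ge0 : forall p, 0 <= modu p.
Hypothesis moduD : forall p q, modu (p + q) <= modu p + modu q.
Hypothesis moduN : forall p, modu (- p) = modu p.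
Hypothesis modu_conjM : forall a p, modu (conj a * p) = modu a * modu p.
Hypothesis modu_embM : forall t p, modu (emb t * p) = `|t| * modu p.
Hypothesis sqr_moduB :
  forall p q, modu p ^+ 2 - modu q ^+ 2 = Lre (p - q) (p + q).
Hypothesis Lre_embl : forall t w s, Lre (emb t * w) s = t * Lre w s.

Local Notation hdot := (hdot conj).
Local Notation hnorm := (hnorm modu).

Lemma modu0 : modu 0 = 0.
Proof. by have := modu_embM 0 0; rewrite mulr0 normr0 mul0r. Qed.

Lemma ler_modu_sum (I : Type) (r : seq I) (F : I -> K) :
  modu (\sum_(i <- r) F i) <= \sum_(i <- r) modu (F i).
Proof.
elim: r => [|x r IHr]; first by rewrite !big_nil modu0.
by rewrite !big_cons; apply: le_trans (moduD _ _) _; rewrite lerD2l.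
Qed.

Lemma ler_modu_dist_dist p q : `|modu p - modu q| <= modu (p - q).
Proof.
have := moduD (p - q) q; have := moduD (q - p) p.
rewrite !subrK -(moduN (q - p)) opprB ler_norml => ? ?; apply/andP; split; lra.
Qed.

Lemma hdotD d (a u v : 'rV[K]_d) : hdot a (u + v) = hdot a u + hdot a v.
Proof.
by rewrite /hdot -big_split; apply: eq_bigr => i _; rewrite mxE mulrDr.
Qed.

Lemma hdotB d (a u v : 'rV[K]_d) : hdot a (u - v) = hdot a u - hdot a v.
Proof. by rewrite /hdot -sumrB; apply: eq_bigr => i _; rewrite !mxE mulrBr. Qed.

Lemma hdotZ d (a u : 'rV[K]_d) c : hdot a (c *: u) = c * hdot a u.
Proof.
by rewrite /hdot mulr_sumr; apply: eq_bigr => i _; rewrite mxE mulrCA.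
Qed.

Lemma hnorm_ge0 d (v : 'rV[K]_d) : 0 <= hnorm v.
Proof. exact: sqrtr_ge0. Qed.

Lemma hnorm0 d : hnorm (0 : 'rV[K]_d) = 0.
Proof. by rewrite /hnorm big1 ?sqrtr0 // => i _; rewrite mxE modu0 expr0n. Qed.

Lemma hnorm_eq1 d (v : 'rV[K]_d) :
  (hnorm v = 1) <-> (\sum_i modu (v 0 i) ^+ 2 = 1).
Proof.
have s0 : 0 <= \sum_i modu (v 0 i) ^+ 2.
  by apply: sumr_ge0 => i _; exact: sqr_ge0.
rewrite /hnorm; split => [e|->]; last exact: sqrtr1.
by rewrite -(sqr_sqrtr s0) e expr1n.
Qed.

Lemma modu_le_hnorm d (v : 'rV[K]_d) i : modu (v 0 i) <= hnorm v.
Proof.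
rewrite -[leLHS]ger0_norm // -sqrtr_sqr; apply: ler_wsqrtr.
by apply: ler_sum_term => j; exact: sqr_ge0.
Qed.

Lemma modu_hdot_le d (a h : 'rV[K]_d) :
  modu (hdot a h) <= (\sum_i modu (a 0 i)) * hnorm h.
Proof.
apply: le_trans (ler_modu_sum _ _) _; rewrite mulr_suml; apply: ler_sum => i _.
by rewrite modu_conjM ler_wpM2l // modu_le_hnorm.
Qed.

Lemma hnormZ d (v : 'rV[K]_d) t : hnorm (emb t *: v) = `|t| * hnorm v.
Proof.
rewrite /hnorm -[`|t|]ger0_norm // -sqrtr_sqr -sqrtrM ?sqr_ge0 //.
congr Num.sqrt; rewrite mulr_sumr; apply: eq_bigr => i _.
by rewrite mxE modu_embM exprMn.
Qed.

Variables (m d : nat) (A : 'M[K]_(m, d)) (b : 'rV[K]_m).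

Local Notation Mab := (Mab conj modu A b).
Local Notation M2ab := (M2ab conj modu A b).

Definition meas j (x : 'rV[K]_d) := hdot (row j A) x + b 0 j.

Lemma measB j x y : meas j x - meas j y = hdot (row j A) (x - y).
Proof. by rewrite /meas hdotB; ring. Qed.

Lemma M2ab_diffE x y j :
  (M2ab x - M2ab y) 0 j = Lre (hdot (row j A) (x - y)) (meas j x + meas j y).
Proof. by rewrite !mxE sqr_moduB -measB. Qed.

Definition M2_gap x y h :=
  \sum_j Lre (hdot (row j A) h) (meas j x + meas j y) ^+ 2.

Lemma M2_gap_ge0 x y h : 0 <= M2_gap x y h.
Proof. by apply: sumr_ge0 => j _; exact: sqr_ge0. Qed.

Lemma sqr_rnorm_M2ab_diff x y :
  rnorm (M2ab x - M2ab y) ^+ 2 = M2_gap x y (x - y).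
Proof. by rewrite sqr_rnorm; apply: eq_bigr => j _; rewrite M2ab_diffE. Qed.

Lemma M2_gapZ x y h t : M2_gap x y (emb t *: h) = t ^+ 2 * M2_gap x y h.
Proof.
rewrite /M2_gap mulr_sumr; apply: eq_bigr => j _.
by rewrite hdotZ Lre_embl exprMn.
Qed.

Lemma M2ab_inj : affine_phase_retrievable conj modu A b -> injective M2ab.
Proof.
move=> apr x y /rowP e; apply: apr; apply/rowP => j; move/eqP: (e j).
by rewrite !mxE eqrXn2 // => /eqP.
Qed.

Lemma M2_gap_gt0 x y h :
  affine_phase_retrievable conj modu A b -> h != 0 -> 0 < M2_gap x y h.
Proof.
move=> apr h0; rewrite lt_def M2_gap_ge0 andbT; apply: contra h0 => /eqP.
rewrite /M2_gap => /(psumr_eq0P (fun j _ => sqr_ge0 _)) term0.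
have two0 : (2 : K) != 0 by rewrite pnatr_eq0.
pose x' := 2^-1 *: (x + y + h); pose y' := 2^-1 *: (x + y - h).
have eD : x' - y' = h by apply/rowP => i; rewrite !mxE; field.
have eS : x' + y' = x + y by apply/rowP => i; rewrite !mxE; field.
have measS j : meas j x' + meas j y' = meas j x + meas j y.
  by rewrite /meas addrACA -hdotD eS hdotD addrACA.
rewrite -eD subr_eq0; apply/eqP/(M2ab_inj apr)/eqP; rewrite -subr_eq0.
apply/eqP/rowP => j; rewrite M2ab_diffE eD measS mxE.
by apply/eqP; rewrite -sqrf_eq0 term0.
Qed.

Definition CAb := \sum_j \sum_i modu (A j i) + \sum_j modu (b 0 j) + 1.

Lemma CAb_ge1 : 1 <= CAb.
Proof. by rewrite lerDr addr_ge0 // !sumr_ge0 // => j _; exact: sumr_ge0. Qed.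

Lemma modu_hdot_row_le j h : modu (hdot (row j A) h) <= CAb * hnorm h.
Proof.
apply: le_trans (modu_hdot_le _ _) _.
apply: ler_wpM2r; first exact: hnorm_ge0.
under eq_bigr do rewrite mxE.
rewrite /CAb -addrA ler_wpDr ?addr_ge0 ?sumr_ge0 //.
apply: (@ler_sum_term _ _ (fun k => \sum_i modu (A k i))) => k.
exact: sumr_ge0.
Qed.

Lemma modu_meas_le j x : modu (meas j x) <= CAb * (1 + hnorm x).
Proof.
apply: le_trans (moduD _ _) _.
rewrite mulrDr mulr1 addrC lerD ?modu_hdot_row_le //.
have := @ler_sum_term _ _ (fun k => modu (b 0 k)) j (fun k => modu_ge0 _) => bj.
have : 0 <= \sum_j \sum_i modu (A j i).
  by apply: sumr_ge0 => k _; exact: sumr_ge0.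
rewrite /CAb; lra.
Qed.

Lemma modu_measB_le j x y :
  `|modu (meas j x) - modu (meas j y)| <= CAb * hnorm (x - y).
Proof.
by apply: le_trans (ler_modu_dist_dist _ _) _; rewrite measB modu_hdot_row_le.
Qed.

Lemma Mab_lipschitz x y :
  rnorm (Mab x - Mab y) <= (m%:R + 1) * CAb * hnorm (x - y).
Proof.
rewrite -mulrA; apply: rnorm_le_const => [|j].
  by rewrite mulr_ge0 ?hnorm_ge0 // (le_trans ler01 CAb_ge1).
by rewrite !mxE modu_measB_le.
Qed.

Lemma M2ab_diff_le x y :
  rnorm (M2ab x - M2ab y) <=
    2 * CAb * (1 + hnorm x + hnorm y) * rnorm (Mab x - Mab y).
Proof.
have C1 := CAb_ge1; have X0 := hnorm_ge0 x; have Y0 := hnorm_ge0 y.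
apply: rnorm_le_scale => [|j]; first by rewrite !mulr_ge0 //; lra.
rewrite !mxE subr_sqr normrM mulrC ler_wpM2r // ger0_norm ?addr_ge0 //.
have := modu_meas_le j x; have := modu_meas_le j y; rewrite /meas; nra.
Qed.

Lemma M2ab_lipschitz x y :
  rnorm (M2ab x - M2ab y) <=
    2 * (m%:R + 1) * CAb ^+ 2 * (1 + hnorm x + hnorm y) * hnorm (x - y).
Proof.
apply: le_trans (M2ab_diff_le x y) _.
have -> : 2 * (m%:R + 1) * CAb ^+ 2 * (1 + hnorm x + hnorm y) * hnorm (x - y) =
  2 * CAb * (1 + hnorm x + hnorm y) * ((m%:R + 1) * CAb * hnorm (x - y)) by ring.
apply: ler_wpM2l (Mab_lipschitz x y).
have := CAb_ge1; have := hnorm_ge0 x; have := hnorm_ge0 y.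
by move=> *; rewrite !mulr_ge0 //; lra.
Qed.

Lemma M2ab_lower_bound c x y : 0 <= c ->
  (forall h, hnorm h = 1 -> c <= M2_gap x y h) ->
  Num.sqrt c * hnorm (x - y) <= rnorm (M2ab x - M2ab y).
Proof.
move=> c0 gap_ge; set t := hnorm (x - y).
have [t0|t_neq0] := eqVneq t 0; first by rewrite t0 mulr0 sqrtr_ge0.
have t_gt0 : 0 < t by rewrite lt_def t_neq0 hnorm_ge0.
have unit : hnorm (emb t^-1 *: (x - y)) = 1.
  by rewrite hnormZ // gtr0_norm ?invr_gt0 // mulVf.
have := gap_ge _ unit; rewrite M2_gapZ -sqr_rnorm_M2ab_diff exprVn mulrC.
rewrite ler_pdivlMr ?exprn_gt0 // => le_c.
rewrite -[t]ger0_norm ?hnorm_ge0 // -sqrtr_sqr -sqrtrM //.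
by rewrite -[rnorm _]ger0_norm ?sqrtr_ge0 // -sqrtr_sqr; apply: ler_wsqrtr.
Qed.

Lemma Mab_lower_bound c x y : 0 <= c ->
  (forall h, hnorm h = 1 -> c <= M2_gap x y h) ->
  Num.sqrt c / (2 * CAb) / (1 + hnorm x + hnorm y) * hnorm (x - y) <=
    rnorm (Mab x - Mab y).
Proof.
move=> c0 gap_ge.
have C1 := CAb_ge1; have X0 := hnorm_ge0 x; have Y0 := hnorm_ge0 y.
have s_gt0 : 0 < 2 * CAb * (1 + hnorm x + hnorm y) by rewrite !mulr_gt0 //; lra.
have -> : Num.sqrt c / (2 * CAb) / (1 + hnorm x + hnorm y) * hnorm (x - y) =
    Num.sqrt c * hnorm (x - y) / (2 * CAb * (1 + hnorm x + hnorm y)).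
  by field; apply/andP; split; apply: lt0r_neq0; lra.
rewrite ler_pdivrMr // [leRHS]mulrC.
exact: le_trans (M2ab_lower_bound c0 gap_ge) (M2ab_diff_le x y).
Qed.

Lemma affine_stability_of_gap_bound (Omega : set 'rV[K]_d) c : 0 < c ->
  (forall x y h, Omega x -> Omega y -> hnorm h = 1 -> c <= M2_gap x y h) ->
  affine_stability_bounds conj modu A b Omega.
Proof.
move=> c_gt0 gap_ge; have C_gt0 : 0 < CAb by apply: lt_le_trans CAb_ge1.
have m_gt0 : 0 < m%:R + 1 :> R by rewrite natr1 ltr0n.
exists ((m%:R + 1) * CAb), (2 * (m%:R + 1) * CAb ^+ 2),
  (Num.sqrt c / (2 * CAb)), (Num.sqrt c).
split; first by split; rewrite ?divr_gt0 ?sqrtr_gt0 ?exprn_gt0 ?mulr_gt0.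
move=> x y Ox Oy; have gap_xy := gap_ge x y _ Ox Oy.
split; [exact: Mab_lower_bound (ltW c_gt0) gap_xy | exact: Mab_lipschitz
       | exact: M2ab_lower_bound (ltW c_gt0) gap_xy | exact: M2ab_lipschitz].
Qed.

Lemma M2_gap_bounded_below (T : topologicalType) (e : T -> 'rV[K]_d)
    (P : set T) (Omega : set 'rV[K]_d) :
  affine_phase_retrievable conj modu A b -> (forall h, exists u, e u = h) ->
  compact P -> Omega `<=` e @` P -> compact (e @^-1` [set h | hnorm h = 1]) ->
  continuous (fun p : T * T * T => M2_gap (e p.1.1) (e p.1.2) (e p.2)) ->
  exists2 c, 0 < c &
    forall x y h, Omega x -> Omega y -> hnorm h = 1 -> c <= M2_gap x y h.
Proof.
move=> apr e_onto cP OmegaP cS gap_cont.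
have cD := compact_setX (compact_setX cP cP) cS.
have [|c c_gt0 c_le] := compact_min_gt0 cD gap_cont.
  move=> [[u v] w] [_ /= Sw]; apply: M2_gap_gt0 => //.
  apply/eqP => w0; move: Sw; rewrite w0 hnorm0 // => /eqP.
  by rewrite eq_sym oner_eq0.
exists c => // _ _ h /OmegaP[u Pu <-] /OmegaP[v Pv <-] Sh.
by have [w ew] := e_onto h; subst h; apply: (c_le ((u, v), w)).
Qed.

Lemma affine_stability_of_param (T : topologicalType) (e : T -> 'rV[K]_d)
    (P : set T) (Omega : set 'rV[K]_d) :
  affine_phase_retrievable conj modu A b -> (forall h, exists u, e u = h) ->
  compact P -> Omega `<=` e @` P -> compact (e @^-1` [set h | hnorm h = 1]) ->
  continuous (fun p : T * T * T => M2_gap (e p.1.1) (e p.1.2) (e p.2)) ->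
  affine_stability_bounds conj modu A b Omega.
Proof.
move=> apr e_onto cP OmegaP cS gap_cont.
have [c c_gt0 gap_ge] := M2_gap_bounded_below apr e_onto cP OmegaP cS gap_cont.
exact: affine_stability_of_gap_bound c_gt0 gap_ge.
Qed.

End AffineMeasurements.

Section RealCoordinates.
Variable R : realType.

Lemma fst_continuous (U V : topologicalType) : continuous (@fst U V).
Proof. by case=> u v; exact: cvg_fst. Qed.

Lemma snd_continuous (U V : topologicalType) : continuous (@snd U V).
Proof. by case=> u v; exact: cvg_snd. Qed.

Lemma continuousT_comp (S T U : topologicalType) (f : S -> T) (g : T -> U) :
  continuous f -> continuous g -> continuous (g \o f).
Proof. by move=> cf cg x; exact: continuous_comp (cf x) (cg (f x)). Qed.

Lemma continuous_add (T : topologicalType) (f g : T -> R) :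
  continuous f -> continuous g -> continuous (fun t => f t + g t).
Proof. by move=> cf cg t; apply: cvgD; [exact: cf | exact: cg]. Qed.

Lemma continuous_mul (T : topologicalType) (f g : T -> R) :
  continuous f -> continuous g -> continuous (fun t => f t * g t).
Proof. by move=> cf cg t; apply: cvgM; [exact: cf | exact: cg]. Qed.

Lemma continuous_sqr (T : topologicalType) (f : T -> R) :
  continuous f -> continuous (fun t => f t ^+ 2).
Proof. by move=> cf; exact: continuous_mul. Qed.

Lemma continuous_sum (T : topologicalType) n (F : 'I_n -> T -> R) :
  (forall i, continuous (F i)) -> continuous (fun t => \sum_i F i t).
Proof.
move=> cF; have -> : (fun t => \sum_i F i t) = \sum_i F i.
  by apply/funext => t; rewrite fct_sumE.
elim/big_ind: _ => // [|f g]; first exact: cst_continuous.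
exact: continuous_add.
Qed.

Lemma continuous_coord_sum (T : topologicalType) n (c : 'I_n -> R)
    (f : T -> 'rV[R]_n) :
  continuous f -> continuous (fun t => \sum_i c i * f t 0 i).
Proof.
move=> cf; apply: continuous_sum => i; apply: continuous_mul => [|t].
  exact: cst_continuous.
exact: continuous_comp (cf t) (@coord_continuous R 1 n 0 i (f t)).
Qed.

Lemma sqr_le1_itv (x : R) : x ^+ 2 <= 1 -> `[-1, 1]%classic x.
Proof. by move=> x2; rewrite /= in_itv /=; apply/andP; split; nra. Qed.

Lemma box_compact n :
  compact [set v : 'rV[R]_n | forall i, `[-1, 1]%classic (v 0 i)].
Proof. exact: (@rV_compact R n _ (fun=> @segment_compact R (-1) 1)). Qed.

Lemma compact_level1 (T : topologicalType) (f : T -> R) (B : set T) :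
  continuous f -> compact B -> [set t | f t = 1] `<=` B ->
  compact [set t | f t = 1].
Proof.
move=> cf cB sub; apply: subclosed_compact cB sub.
have -> : [set t | f t = 1] = f @^-1` [set 1] by [].
by apply: preimage_closed; [move=> t _; exact: cf | exact: closed_eq].
Qed.

End RealCoordinates.

Section RealScalars.
Variable R : realType.

Lemma sqr_normB (p q : R) : `|p| ^+ 2 - `|q| ^+ 2 = (p - q) * (p + q).
Proof. by rewrite !real_normK ?num_real // subr_sqr. Qed.

Lemma real_unit_sphereE d :
  [set h : 'rV[R]_d | hnorm (fun z : R => `|z|) h = 1] =
  [set h | \sum_i h 0 i ^+ 2 = 1].
Proof.
have normK (h : 'rV[R]_d) : \sum_i `|h 0 i| ^+ 2 = \sum_i h 0 i ^+ 2.
  by apply: eq_bigr => i _; rewrite real_normK ?num_real.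
by apply/seteqP; split => h /=; rewrite hnorm_eq1 normK.
Qed.

Lemma real_unit_sphere_compact d :
  compact [set h : 'rV[R]_d | \sum_i h 0 i ^+ 2 = 1].
Proof.
apply: (compact_level1 _ (@box_compact R d)).
  by apply: continuous_sum => i; apply: continuous_sqr; exact: coord_continuous.
move=> h /= h1 i; apply: sqr_le1_itv; rewrite -h1.
by apply: ler_sum_term => j; exact: sqr_ge0.
Qed.

Lemma real_affine_stability m d (A : 'M[R]_(m, d)) (b : 'rV[R]_m)
    (Omega : set 'rV[R]_d) :
  affine_phase_retrievable id (fun z : R => `|z|) A b -> compact Omega ->
  affine_stability_bounds id (fun z : R => `|z|) A b Omega.
Proof.
move=> apr cOmega.
apply: (@affine_stability_of_param R R id (fun z => `|z|) id *%R
  (fun p => normr_ge0 p) (fun p q => ler_normD p q) (fun p => normrN p)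
  (fun a p => normrM a p) (fun t p => normrM t p) sqr_normB
  (fun t w s => esym (mulrA t w s)) m d A b _ id Omega Omega) => //.
- by move=> h; exists h.
- by move=> x Ox; exists x.
- by rewrite preimage_id real_unit_sphereE; exact: real_unit_sphere_compact.
have c2 : continuous (fun p : 'rV[R]_d * 'rV[R]_d * 'rV[R]_d => p.2).
  by move=> p; exact: snd_continuous.
have c11 : continuous (fun p : 'rV[R]_d * 'rV[R]_d * 'rV[R]_d => p.1.1).
  exact: continuousT_comp (@fst_continuous _ _) (@fst_continuous _ _).
have c12 : continuous (fun p : 'rV[R]_d * 'rV[R]_d * 'rV[R]_d => p.1.2).
  exact: continuousT_comp (@fst_continuous _ _) (@snd_continuous _ _).
rewrite /M2_gap /meas /hdot; apply: continuous_sum => j.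
apply/continuous_sqr/continuous_mul; first exact: continuous_coord_sum c2.
by apply: continuous_add; apply: continuous_add;
  [exact: continuous_coord_sum c11 | exact: cst_continuous
  |exact: continuous_coord_sum c12 | exact: cst_continuous].
Qed.

End RealScalars.

Section ComplexScalars.
Variable R : realType.
Local Notation reim d := ('rV[R]_d * 'rV[R]_d)%type.

Definition complexify d (H : reim d) : 'rV[R[i]]_d :=
  \row_i (H.1 0 i +i* H.2 0 i)%C.

Lemma realifyK d : cancel (@realify R d) (@complexify d).
Proof. by move=> x; apply/rowP => i; rewrite !mxE; case: (x 0 i). Qed.

Definition re_dot (w s : R[i]) : R :=
  complex.Re w * complex.Re s + complex.Im w * complex.Im s.

Lemma normcE (z : R[i]) : `|z| = (cmod z)%:C%C.
Proof. exact: normc_def. Qed.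

Lemma cmod_ge0 (z : R[i]) : 0 <= cmod z.
Proof. exact: sqrtr_ge0. Qed.

Lemma sqr_cmod (z : R[i]) : cmod z ^+ 2 = complex.Re z ^+ 2 + complex.Im z ^+ 2.
Proof. by rewrite sqr_sqrtr // addr_ge0 ?sqr_ge0. Qed.

Lemma cmodD (p q : R[i]) : cmod (p + q) <= cmod p + cmod q.
Proof. by have := ler_normD p q; rewrite !normcE -rmorphD /= lecR. Qed.

Lemma cmodN (p : R[i]) : cmod (- p) = cmod p.
Proof. by case: p => a b; rewrite /cmod /= !sqrrN. Qed.

Lemma cmodM (p q : R[i]) : cmod (p * q) = cmod p * cmod q.
Proof. by apply: complexI; rewrite rmorphM /= -!normcE normrM. Qed.

Lemma cmodM_conjc (a p : R[i]) : cmod (a^* * p)%C = cmod a * cmod p.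
Proof. by rewrite cmodM; case: a => a1 a2; rewrite /cmod /= sqrrN. Qed.

Lemma cmodM_real (t : R) (p : R[i]) : cmod (t%:C * p)%C = `|t| * cmod p.
Proof. by rewrite cmodM /cmod /= expr0n /= addr0 sqrtr_sqr. Qed.

Lemma sqr_cmodB (p q : R[i]) :
  cmod p ^+ 2 - cmod q ^+ 2 = re_dot (p - q) (p + q).
Proof.
by rewrite !sqr_cmod; case: p => a b; case: q => c e; rewrite /re_dot /=; ring.
Qed.

Lemma re_dotZl (t : R) (w s : R[i]) : re_dot (t%:C * w)%C s = t * re_dot w s.
Proof. by case: w => a b; rewrite /re_dot /=; ring. Qed.

Definition ccontinuous (T : topologicalType) (g : T -> R[i]) :=
  continuous (fun t => complex.Re (g t)) /\
  continuous (fun t => complex.Im (g t)).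

Lemma ccontinuous_cst (T : topologicalType) (c : R[i]) :
  ccontinuous (fun _ : T => c).
Proof. by split; exact: cst_continuous. Qed.

Lemma ccontinuousD (T : topologicalType) (g h : T -> R[i]) :
  ccontinuous g -> ccontinuous h -> ccontinuous (fun t => g t + h t).
Proof.
move=> [cg1 cg2] [ch1 ch2]; rewrite /ccontinuous /=.
have -> : (fun t => complex.Re (g t + h t)) =
    (fun t => complex.Re (g t) + complex.Re (h t)).
  by apply/funext => t; case: (g t); case: (h t).
have -> : (fun t => complex.Im (g t + h t)) =
    (fun t => complex.Im (g t) + complex.Im (h t)).
  by apply/funext => t; case: (g t); case: (h t).
by split; exact: continuous_add.
Qed.

Lemma continuous_re_dot (T : topologicalType) (g h : T -> R[i]) :
  ccontinuous g -> ccontinuous h -> continuous (fun t => re_dot (g t) (h t)).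
Proof.
by move=> [cg1 cg2] [ch1 ch2]; apply: continuous_add; exact: continuous_mul.
Qed.

Lemma ccontinuous_hdot (T : topologicalType) d (a : 'rV[R[i]]_d)
    (f : T -> reim d) :
  continuous f -> ccontinuous (fun t => hdot conjc a (complexify (f t))).
Proof.
move=> cf; have cf1 := continuousT_comp cf (@fst_continuous _ _).
have cf2 := continuousT_comp cf (@snd_continuous _ _); rewrite /ccontinuous /=.
have -> : (fun t => complex.Re (hdot conjc a (complexify (f t)))) =
    (fun t => \sum_i complex.Re (a 0 i) * (f t).1 0 i +
              \sum_i complex.Im (a 0 i) * (f t).2 0 i).
  apply/funext => t; rewrite /hdot raddf_sum -big_split; apply: eq_bigr => i _.
  by rewrite mxE; case: (a 0 i) => a1 a2 /=; ring.
have -> : (fun t => complex.Im (hdot conjc a (complexify (f t)))) =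
    (fun t => \sum_i complex.Re (a 0 i) * (f t).2 0 i +
              \sum_i - complex.Im (a 0 i) * (f t).1 0 i).
  apply/funext => t; rewrite /hdot raddf_sum -big_split; apply: eq_bigr => i _.
  by rewrite mxE; case: (a 0 i) => a1 a2 /=; ring.
by split; apply: continuous_add;
  [exact: continuous_coord_sum cf1 | exact: continuous_coord_sum cf2
  |exact: continuous_coord_sum cf2 | exact: continuous_coord_sum cf1].
Qed.

Lemma complex_unit_sphereE d :
  @complexify d @^-1` [set h | hnorm (@cmod R) h = 1] =
  [set H : reim d | \sum_i (H.1 0 i ^+ 2 + H.2 0 i ^+ 2) = 1].
Proof.
have sqrK (H : reim d) :
    \sum_i cmod (complexify H 0 i) ^+ 2 = \sum_i (H.1 0 i ^+ 2 + H.2 0 i ^+ 2).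
  by apply: eq_bigr => i _; rewrite sqr_cmod mxE.
by apply/seteqP; split => H /=; rewrite hnorm_eq1 sqrK.
Qed.

Lemma complex_unit_sphere_compact d :
  compact [set H : reim d | \sum_i (H.1 0 i ^+ 2 + H.2 0 i ^+ 2) = 1].
Proof.
apply: (compact_level1 _ (compact_setX (@box_compact R d) (@box_compact R d))).
  apply: continuous_sum => i; apply: continuous_add; apply: continuous_sqr.
    exact: continuousT_comp (@fst_continuous _ _) (@coord_continuous R 1 d 0 i).
  exact: continuousT_comp (@snd_continuous _ _) (@coord_continuous R 1 d 0 i).
move=> H /= H1.
have le1 i : H.1 0 i ^+ 2 + H.2 0 i ^+ 2 <= 1.
  by rewrite -H1; apply: ler_sum_term => j; rewrite addr_ge0 ?sqr_ge0.
by split => i /=; apply: sqr_le1_itv; apply: le_trans (le1 i);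
  rewrite ?lerDl ?lerDr sqr_ge0.
Qed.

Lemma complex_affine_stability m d (A : 'M[R[i]]_(m, d)) (b : 'rV[R[i]]_m)
    (Omega : set 'rV[R[i]]_d) :
  affine_phase_retrievable (@conjc R) (@cmod R) A b -> compactC Omega ->
  affine_stability_bounds (@conjc R) (@cmod R) A b Omega.
Proof.
move=> apr cOmega.
apply: (@affine_stability_of_param R R[i] conjc (@cmod R) (fun t => t%:C%C)
  re_dot cmod_ge0 cmodD cmodN cmodM_conjc cmodM_real sqr_cmodB re_dotZl
  m d A b _ (@complexify d) (@realify R d @` Omega) Omega) => //.
- by move=> h; exists (realify h); exact: realifyK.
- by move=> x Ox; exists (realify x); [exists x | exact: realifyK].
- by rewrite complex_unit_sphereE; exact: complex_unit_sphere_compact.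
have c2 : continuous (fun p : reim d * reim d * reim d => p.2).
  by move=> p; exact: snd_continuous.
have c11 : continuous (fun p : reim d * reim d * reim d => p.1.1).
  exact: continuousT_comp (@fst_continuous _ _) (@fst_continuous _ _).
have c12 : continuous (fun p : reim d * reim d * reim d => p.1.2).
  exact: continuousT_comp (@fst_continuous _ _) (@snd_continuous _ _).
rewrite /M2_gap; apply: continuous_sum => j.
apply/continuous_sqr/continuous_re_dot.
  exact: ccontinuous_hdot c2.
rewrite /meas; apply: ccontinuousD; apply: ccontinuousD;
  [exact: ccontinuous_hdot c11 | exact: ccontinuous_cst
  |exact: ccontinuous_hdot c12 | exact: ccontinuous_cst].
Qed.

End ComplexScalars.

Theorem theorem4p1 (R : realType) :
  (* H = R *)
  (forall (m d : nat) (A : 'M[R]_(m, d)) (b : 'rV[R]_m) (Omega : set 'rV[R]_d),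
     affine_phase_retrievable id (fun z : R => `|z|) A b ->
     compact Omega ->
     affine_stability_bounds id (fun z : R => `|z|) A b Omega)
  /\
  (* H = C *)
  (forall (m d : nat) (A : 'M[R[i]]_(m, d)) (b : 'rV[R[i]]_m)
          (Omega : set 'rV[R[i]]_d),
     affine_phase_retrievable (@conjc R) (@cmod R) A b ->
     compactC Omega ->
     affine_stability_bounds (@conjc R) (@cmod R) A b Omega).
Proof.
split=> m d A b Omega; first exact: real_affine_stability.
exact: complex_affine_stability.
Qed.
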